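(* Let $V$ be a two-sided vector space of rank $n$. For a simultaneous basis $y_1,\dots,y_n$ of $V$, let $\phi_1,\dots,\phi_n\in{}^*V$ be given by $\phi_i(y_j)=\delta_{ij}$, and let $\eta:K\to{}^*V\otimes_KV$ be $\eta(a)=a\sum_i\phi_i\otimes y_i$. Then the image of $\eta$ is independent of the choice of simultaneous basis.
   Context: Let $k\subset K$ be fields. A two-sided vector space is a $K\otimes_kK$-module; left (resp. right) multiplication by $K$ is the action of $K\otimes1$ (resp. $1\otimes K$). Rank $n$ means dimension $n$ both as a left and as a right $K$-vector space; a simultaneous basis is a basis for both actions. The left dual ${}^*V$ is $\operatorname{Hom}_K({}_KV,K)$ (left $K$-linear maps) with action $(a\cdot\phi\cdot b)(x)=b\phi(xa)$. The tensor product ${}^*V\otimes_KV$ is formed using the right $K$-action on ${}^*V$ and the left $K$-action on $V$. *)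

From HB Require Import structures.
From mathcomp Require Import all_boot all_algebra.
Set Implicit Arguments. Unset Strict Implicit. Unset Printing Implicit Defensive.
Import GRing.Theory.
Local Open Scope ring_scope.

(* Two-sided vector spaces over k ⊂ K (k embedded in K by the field morphism f):
   a K⊗_k K-module, i.e. an abelian group with a left and a right K-action,
   commuting with each other, and such that k acts identically on both sides. *)
Record twoSidedSpace (k K : fieldType) (f : {rmorphism k -> K}) := TwoSidedSpace {
  tsV :> zmodType;
  lact : K -> tsV -> tsV;
  ract : tsV -> K -> tsV;
  lact1 : forall x, lact 1 x = x;
  lactM : forall a b x, lact (a * b) x = lact a (lact b x);
  lactDl : forall a b x, lact (a + b) x = lact a x + lact b x;
  lactDr : forall a x y, lact a (x + y) = lact a x + lact a y;
  ract1 : forall x, ract x 1 = x;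
  ractM : forall a b x, ract x (a * b) = ract (ract x a) b;
  ractDl : forall a b x, ract x (a + b) = ract x a + ract x b;
  ractDr : forall a x y, ract (x + y) a = ract x a + ract y a;
  lractA : forall a b x, lact a (ract x b) = ract (lact a x) b;
  k_central : forall c x, lact (f c) x = ract x (f c)
}.

Arguments lact {k K f} t.
Arguments ract {k K f} t.

Section Defs.
Context (k K : fieldType) (f : {rmorphism k -> K}) (V : twoSidedSpace f).

Definition left_basis (n : nat) (y : 'I_n -> V) : Prop :=
  (forall x : V, exists c : 'I_n -> K, x = \sum_(i < n) lact V (c i) (y i)) /\
  (forall c : 'I_n -> K, \sum_(i < n) lact V (c i) (y i) = 0 -> forall i, c i = 0).

Definition right_basis (n : nat) (y : 'I_n -> V) : Prop :=
  (forall x : V, exists c : 'I_n -> K, x = \sum_(i < n) ract V (y i) (c i)) /\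
  (forall c : 'I_n -> K, \sum_(i < n) ract V (y i) (c i) = 0 -> forall i, c i = 0).

Definition has_rank (n : nat) : Prop :=
  (exists y : 'I_n -> V, left_basis y) /\ (exists y : 'I_n -> V, right_basis y).

Definition simultaneous_basis (n : nat) (y : 'I_n -> V) : Prop :=
  left_basis y /\ right_basis y.

Definition left_linear (phi : V -> K) : Prop :=
  (forall x y, phi (x + y) = phi x + phi y) /\
  (forall a x, phi (lact V a x) = a * phi x).

Definition dual := {phi : V -> K | left_linear phi}.

Lemma dadd_lin (phi psi : dual) : left_linear (fun x => sval phi x + sval psi x).
Proof.
case: phi psi => [p [p1 p2]] [q [q1 q2]] /=; split=> *.
  by rewrite p1 q1 addrACA.
by rewrite p2 q2 mulrDr.
Qed.
Definition dadd (phi psi : dual) : dual := exist _ _ (dadd_lin phi psi).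

Lemma dzero_lin : left_linear (fun _ => 0).
Proof. by split=> *; rewrite ?addr0 ?mulr0. Qed.
Definition dzero : dual := exist _ _ dzero_lin.

Lemma dract_lin (phi : dual) (b : K) : left_linear (fun x => b * sval phi x).
Proof.
case: phi => [p [p1 p2]] /=; split=> *; first by rewrite p1 mulrDr.
by rewrite p2 mulrCA.
Qed.
Definition dract (phi : dual) (b : K) : dual := exist _ _ (dract_lin phi b).

Lemma dlact_lin (a : K) (phi : dual) : left_linear (fun x => sval phi (ract V x a)).
Proof.
case: phi => [p [p1 p2]] /=; split=> *; first by rewrite ractDr p1.
by rewrite -lractA p2.
Qed.
Definition dlact (a : K) (phi : dual) : dual := exist _ _ (dlact_lin a phi).

(* The tensor product *V ⊗_K V, presented by generators and relations:
   an element is a finite formal sum of pure tensors phi ⊗ v (a list of pairs),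
   and [teq] is the congruence generated by biadditivity, K-balancedness
   (phi·b) ⊗ v = phi ⊗ (b·v), and 0 ⊗ v = 0 (the latter makes the
   presented commutative monoid the presented abelian group). *)
Definition tensor := seq (dual * V).

Inductive teq : tensor -> tensor -> Prop :=
| teq_refl s : teq s s
| teq_sym s t : teq s t -> teq t s
| teq_trans s t u : teq s t -> teq t u -> teq s u
| teq_cat s s' t t' : teq s s' -> teq t t' -> teq (s ++ t) (s' ++ t')
| teq_catC s t : teq (s ++ t) (t ++ s)
| teq_addl phi psi v : teq [:: (dadd phi psi, v)] [:: (phi, v); (psi, v)]
| teq_addr phi v w : teq [:: (phi, v + w)] [:: (phi, v); (phi, w)]
| teq_bal phi b v : teq [:: (dract phi b, v)] [:: (phi, lact V b v)]
| teq_zero v : teq [:: (dzero, v)] [::].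

Definition tlact (a : K) (s : tensor) : tensor :=
  [seq (dlact a p.1, p.2) | p <- s].

Definition etaV (n : nat) (phi : 'I_n -> dual) (y : 'I_n -> V) (a : K) : tensor :=
  tlact a [seq (phi i, y i) | i <- enum 'I_n].

End Defs.

From HB Require Import structures.
From mathcomp Require Import all_boot all_algebra.
From Stdlib Require Import ProofIrrelevance FunctionalExtensionality.
Import GRing.Theory.
Set Implicit Arguments. Unset Strict Implicit.
Local Open Scope ring_scope.

(* If y_i = sum_j c_ij z_j, duality forces psi_j = sum_i phi_i c_ij, and
   balancedness gives sum_i phi_i (x) y_i = sum_ij phi_i c_ij (x) z_j
   = sum_j psi_j (x) z_j.  So the element sum_i phi_i (x) y_i does not depend
   on the basis, and since the left action of K respects the defining
   relations of the tensor product, eta itself is basis independent. *)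

Section DualTensor.
Context (k K : fieldType) (f : {rmorphism k -> K}) (V : twoSidedSpace f).

Lemma dual_ext (p q : dual V) : (forall x, sval p x = sval q x) -> p = q.
Proof.
case: p q => [p hp] [q hq] /= eq_pq.
have {}eq_pq : p = q by apply: functional_extensionality.
by subst q; rewrite (proof_irrelevance _ hp hq).
Qed.

Lemma lact0 (x : V) : lact V 0 x = 0.
Proof.
apply: (addrI (lact V 0 x)).
by rewrite -lactDl !addr0.
Qed.

Lemma dual_sum_lact (p : dual V) I (r : seq I) (d : I -> K) (w : I -> V) :
  sval p (\sum_(m <- r) lact V (d m) (w m)) = \sum_(m <- r) d m * sval p (w m).
Proof.
case: p => [p [pD pZ]] /=; elim: r => [|m r IH].
  by rewrite !big_nil -(lact0 0) pZ mul0r.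
by rewrite !big_cons pD pZ IH.
Qed.

Definition dsum I (r : seq I) (p : I -> dual V) : dual V :=
  foldr (fun i acc => dadd (p i) acc) (dzero V) r.

Lemma dsumE I (r : seq I) (p : I -> dual V) x :
  sval (dsum r p) x = \sum_(i <- r) sval (p i) x.
Proof. by elim: r => [|i r IH] /=; rewrite ?big_nil ?big_cons ?IH. Qed.

Lemma dlact_dzero (a : K) : dlact a (dzero V) = dzero V.
Proof. exact: dual_ext. Qed.

Lemma dlact_dadd (a : K) (p q : dual V) : dlact a (dadd p q) = dadd (dlact a p) (dlact a q).
Proof. exact: dual_ext. Qed.

Lemma dlact_dract (a : K) (p : dual V) (b : K) : dlact a (dract p b) = dract (dlact a p) b.
Proof. exact: dual_ext. Qed.

Lemma teq_tlact (a : K) (s t : tensor V) : teq s t -> teq (tlact a s) (tlact a t).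
Proof.
rewrite /tlact; elim=> {s t} /=.
- by move=> s; apply: teq_refl.
- by move=> s t _; apply: teq_sym.
- by move=> s t u _ st _ tu; apply: teq_trans st tu.
- by move=> s s' t t' _ ss' _ tt'; rewrite !map_cat; apply: teq_cat.
- by move=> s t; rewrite !map_cat; apply: teq_catC.
- by move=> p q v; rewrite dlact_dadd; apply: teq_addl.
- by move=> p v w; apply: teq_addr.
- by move=> p b v; rewrite dlact_dract; apply: teq_bal.
- by move=> v; rewrite dlact_dzero; apply: teq_zero.
Qed.

Lemma teq_flatten I (r : seq I) (F G : I -> tensor V) :
  (forall i, teq (F i) (G i)) -> teq (flatten (map F r)) (flatten (map G r)).
Proof.
move=> FG; elim: r => [|i r IH] /=; first exact: teq_refl.
exact: teq_cat (FG i) IH.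
Qed.

Lemma teq_interleave J (s : seq J) (g : J -> dual V * V) (L : J -> tensor V) :
  teq (map g s ++ flatten (map L s)) (flatten [seq g j :: L j | j <- s]).
Proof.
elim: s => [|j s IH] /=; first exact: teq_refl.
apply: (teq_cat (s := [:: g j]) (teq_refl _)).
rewrite catA; apply: teq_trans (teq_cat (teq_catC _ _) (teq_refl _)) _.
by rewrite -catA; apply: teq_cat (teq_refl _) IH.
Qed.

Lemma teq_flatten_exchange I J (r : seq I) (s : seq J) (F : I -> J -> dual V * V) :
  teq (flatten [seq [seq F i j | j <- s] | i <- r])
      (flatten [seq [seq F i j | i <- r] | j <- s]).
Proof.
elim: r => [|i r IH] /=; first by elim: s => [|j s IHs] //=; apply: teq_refl.
apply: teq_trans (teq_cat (teq_refl _) IH) _.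
exact: teq_interleave.
Qed.

Lemma teq_sum_lactr (p : dual V) I (r : seq I) (c : I -> K) (w : I -> V) :
  teq [:: (p, \sum_(j <- r) lact V (c j) (w j))] [seq (dract p (c j), w j) | j <- r].
Proof.
elim: r => [|j r IH] /=.
  rewrite big_nil -(lact0 0).
  apply: teq_trans (teq_sym (teq_bal _ _ _)) _.
  have -> : dract p 0 = dzero V by apply: dual_ext => x /=; rewrite mul0r.
  exact: teq_zero.
rewrite big_cons; apply: teq_trans (teq_addr _ _ _) _.
exact: (teq_cat (s := [:: _]) (teq_sym (teq_bal _ _ _)) IH).
Qed.

Lemma teq_dsuml I (r : seq I) (p : I -> dual V) (v : V) :
  teq [seq (p i, v) | i <- r] [:: (dsum r p, v)].
Proof.
elim: r => [|i r IH] /=; first exact/teq_sym/teq_zero.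
apply: teq_trans (teq_sym (teq_addl _ _ _)).
exact: teq_cat (teq_refl [:: _]) IH.
Qed.

Lemma teq_change_basis I (r : seq I) (phi psi : I -> dual V) (y z : I -> V)
    (c : I -> I -> K) :
  (forall i, y i = \sum_(j <- r) lact V (c i j) (z j)) ->
  (forall j x, sval (psi j) x = \sum_(i <- r) c i j * sval (phi i) x) ->
  teq [seq (phi i, y i) | i <- r] [seq (psi j, z j) | j <- r].
Proof.
move=> yE psiE; have map_flatten1 (F : I -> dual V * V) :
    map F r = flatten [seq [:: F i] | i <- r] by elim: r {yE psiE} => //= i r ->.
rewrite map_flatten1 (map_flatten1 (fun j => (psi j, z j))).
apply: teq_trans.
  by apply: teq_flatten => i; rewrite yE; apply: teq_sum_lactr.
apply: teq_trans (teq_flatten_exchange _ _ _) _.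
apply: teq_flatten => j; apply: teq_trans (teq_dsuml _ _ _) _.
have -> : dsum r (fun i => dract (phi i) (c i j)) = psi j.
  by apply: dual_ext => x; rewrite dsumE psiE.
exact: teq_refl.
Qed.

Lemma dual_basis_change n (y z : 'I_n -> V) (phi psi : 'I_n -> dual V)
    (c : 'I_n -> 'I_n -> K) :
  (forall x, exists d : 'I_n -> K, x = \sum_(i < n) lact V (d i) (y i)) ->
  (forall i j, sval (phi i) (y j) = (i == j)%:R) ->
  (forall i j, sval (psi i) (z j) = (i == j)%:R) ->
  (forall i, y i = \sum_(j < n) lact V (c i j) (z j)) ->
  forall j x, sval (psi j) x = \sum_(i < n) c i j * sval (phi i) x.
Proof.
move=> yspan phiE psiE yE j x; have [d ->] := yspan x.
have sum_delta (e : 'I_n -> K) l : \sum_(m < n) e m * (l == m)%:R = e l.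
  rewrite (bigD1 l) //= eqxx mulr1 big1 ?addr0 // => m ml.
  by rewrite eq_sym (negbTE ml) mulr0.
rewrite dual_sum_lact.
under [RHS]eq_bigr => i _ do rewrite dual_sum_lact big_distrr /=.
rewrite exchange_big /=; apply: eq_bigr => m _.
have psi_y : sval (psi j) (y m) = c m j.
  rewrite yE dual_sum_lact -[RHS]sum_delta.
  by apply: eq_bigr => l _; rewrite psiE eq_sym.
rewrite psi_y mulrC -[LHS](sum_delta (fun i => c i j * d m) m).
by apply: eq_bigr => i _; rewrite phiE mulrA eq_sym.
Qed.

End DualTensor.

Theorem proposition3p9 (k K : fieldType) (f : {rmorphism k -> K})
  (V : twoSidedSpace f) (n : nat) (Hrank : has_rank V n)
  (y z : 'I_n -> V) (phi psi : 'I_n -> dual V)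
  (Hy : simultaneous_basis y) (Hz : simultaneous_basis z)
  (Hphi : forall i j, sval (phi i) (y j) = (i == j)%:R)
  (Hpsi : forall i j, sval (psi i) (z j) = (i == j)%:R) :
  (forall a : K, exists b : K, teq (etaV phi y a) (etaV psi z b)) /\
  (forall b : K, exists a : K, teq (etaV phi y a) (etaV psi z b)).
Proof.
case: Hy Hz => [[yspan _] _] [[zspan _] _].
have [c yE] : exists c : 'I_n -> 'I_n -> K,
    forall i, y i = \sum_(j < n) lact V (c i j) (z j).
  exact: (fin_all_exists (fun i => zspan (y i))).
have coev : teq [seq (phi i, y i) | i <- enum 'I_n] [seq (psi j, z j) | j <- enum 'I_n].
  have -> : enum 'I_n = index_enum 'I_n by rewrite enumT [index_enum _]unlock.
  apply: (teq_change_basis (c := c)) => [i | j x]; first exact: yE.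
  exact: dual_basis_change yspan Hphi Hpsi yE j x.
by split=> a; exists a; apply: teq_tlact.
Qed.
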